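(* Assume that $X^\infty\cap\mathcal{K}(f)=\{0\}$. Then: (a) Problem (P) has a finite optimal value $f_*:=\inf_{x\in X}f(x)$, and $\mathrm{Sol}(P)$ is nonempty and compact. (b) Problem (P) has weak sharp minima at infinity: there exist constants $c>0$ and $R>0$ such that $$f(x)-f_*\ \ge\ c\,\mathrm{dist}(x,\mathrm{Sol}(P))\quad\text{for all } x\in X\setminus\mathbb{B}_R.$$ (c) $f$ is coercive on $X$, i.e. $f(x)\to+\infty$ whenever $x\in X$ and $\|x\|\to\infty$.
   Context: Standing assumptions: $f:\mathbb{R}^n\to\mathbb{R}\cup\{\pm\infty\}$ is proper (never $-\infty$ and finite at some point) and lower semicontinuous, with $\operatorname{dom}f=\{x:f(x)<+\infty\}$; $X\subset\mathbb{R}^n$ is a nonempty closed set with $\operatorname{dom}f\cap X$ unbounded. Problem (P) is $\inf_{x\in X}f(x)$ and $\mathrm{Sol}(P)=\{x\in X: f(x)\le f(y)\ \forall y\in X\}$. $\mathbb{B}_R$ is the open Euclidean ball of radius $R$ centered at $0$; $\mathrm{dist}(x,S)=\inf_{s\in S}\|x-s\|$. The asymptotic cone of $X$ is $X^\infty=\{u\in\mathbb{R}^n:\exists t_k\to+\infty,\ \exists x_k\in X,\ x_k/t_k\to u\}$. The asymptotic function of $f$ is $f^\infty(d)=\inf\{\liminf_{k\to\infty} f(t_kd_k)/t_k:\ t_k\to+\infty,\ d_k\to d\}$ (equivalently, $\operatorname{epi}f^\infty=(\operatorname{epi}f)^\infty$). $\mathcal{K}(f)=\{d\in\mathbb{R}^n: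 f^\infty(d)\le 0\}$. *)

(* R : realType, R^n = 'rV[R]_n (product topology =
   standard topology), extended reals \bar R. *)
From HB Require Import structures.
From mathcomp Require Import all_boot all_order all_algebra.
From mathcomp Require Import all_classical all_reals all_analysis.
Set Implicit Arguments. Unset Strict Implicit. Unset Printing Implicit Defensive.
Import Order.TTheory GRing.Theory Num.Theory.
Import numFieldNormedType.Exports.
Local Open Scope classical_set_scope.
Local Open Scope ring_scope.

Definition eucl_norm {R : realType} {n : nat} (x : 'rV[R]_n) : R :=
  Num.sqrt (\sum_(i < n) x ord0 i ^+ 2).

(* dist(x, S) = inf_{s in S} ||x - s|| (as an extended real; +oo if S empty) *)
Definition dist_set {R : realType} {n : nat} (x : 'rV[R]_n) (S : set 'rV[R]_n)
  : \bar R := ereal_inf [set (eucl_norm (x - s))%:E | s in S].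

Definition proper_fun {R : realType} {n : nat} (f : 'rV[R]_n -> \bar R) :=
  (forall x, f x != -oo%E) /\ (exists x, f x \is a fin_num).

Definition dom {R : realType} {n : nat} (f : 'rV[R]_n -> \bar R) :=
  [set x | (f x < +oo)%E].

Definition unbounded {R : realType} {n : nat} (S : set 'rV[R]_n) :=
  forall M : R, exists2 x, S x & M < eucl_norm x.

Definition asymp_cone {R : realType} {n : nat} (X : set 'rV[R]_n)
  : set 'rV[R]_n :=
  [set u | exists (t : nat -> R) (x : nat -> 'rV[R]_n),
      t @ \oo --> +oo /\ (forall k, X (x k)) /\
      (fun k => (t k)^-1 *: x k) @ \oo --> u].

Definition asymp_fun {R : realType} {n : nat} (f : 'rV[R]_n -> \bar R)
  (d : 'rV[R]_n) : \bar R :=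
  ereal_inf [set y | exists (t : nat -> R) (dk : nat -> 'rV[R]_n),
     t @ \oo --> +oo /\ dk @ \oo --> d /\
     y = limn_einf (fun k => (f (t k *: dk k) * ((t k)^-1)%:E)%E)].

Definition Kf {R : realType} {n : nat} (f : 'rV[R]_n -> \bar R) : set 'rV[R]_n :=
  [set d | (asymp_fun f d <= 0)%E].

Definition optval {R : realType} {n : nat} (f : 'rV[R]_n -> \bar R)
  (X : set 'rV[R]_n) : \bar R := ereal_inf (f @` X).

Definition Sol {R : realType} {n : nat} (f : 'rV[R]_n -> \bar R)
  (X : set 'rV[R]_n) : set 'rV[R]_n :=
  [set x | X x /\ forall y, X y -> (f x <= f y)%E].

From HB Require Import structures.
From mathcomp Require Import all_boot all_order all_algebra.
From mathcomp Require Import all_classical all_reals all_analysis.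
From mathcomp Require Import ring lra.
Import Order.TTheory GRing.Theory Num.Theory.
Import numFieldNormedType.Exports.
Local Open Scope classical_set_scope.
Local Open Scope ring_scope.

(* The hypothesis X^oo ∩ K(f) = {0} forces linear growth: f x >= c |x| on X
   outside a ball.  Otherwise there are x_k in X with |x_k| -> oo and
   f x_k < |x_k| / k; a cluster point d of x_k / |x_k| is then a unit
   direction lying both in X^oo and in K(f).  Linear growth makes f coercive
   on X, which gives (c), and lets a minimiser be found on a compact piece of
   X, which gives (a).  Finally dist(x, Sol) grows at most like |x| + |z| for
   any minimiser z, so half of the growth c |x| pays for it, which gives (b). *)

(* [`|x|] is the sup norm of the matrix normed structure; [eucl_norm] only
   enters through the statement. *)
Section RowVectorNorms.
Context {R : realType} {n : nat}.
Implicit Types (x : 'rV[R]_n) (rho : R).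

Lemma mx_norm_coord_le x i : `|x ord0 i| <= `|x|.
Proof.
rewrite [leRHS]/Num.norm /= mx_normrE.
exact: (le_bigmax _ (fun ij : 'I_1 * 'I_n => `|x ij.1 ij.2|) (ord0, i)).
Qed.

Lemma eucl_norm_le_mx_norm x : eucl_norm x <= n.+1%:R * `|x|.
Proof.
have h0 : 0 <= n.+1%:R * `|x| by rewrite mulr_ge0.
rewrite -[leRHS]ger0_norm // -sqrtr_sqr /eucl_norm ler_sqrt; last exact: sqr_ge0.
apply: (@le_trans _ _ (\sum_(i < n) `|x| ^+ 2)).
  apply: ler_sum => i _; rewrite -real_normK ?num_real //.
  by rewrite lerXn2r ?nnegrE ?normr_ge0 ?mx_norm_coord_le.
rewrite sumr_const card_ord exprMn -mulr_natl mulr1 -[leLHS]mulr_natl.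
apply: ler_wpM2r; first exact: sqr_ge0.
by rewrite -natrX ler_nat (leq_trans (leqnSn n)) // -[X in (X <= _)%N]expn1 leq_pexp2l.
Qed.

Lemma mx_norm_gt_of_eucl_norm_gt x rho : n.+1%:R * rho < eucl_norm x -> rho < `|x|.
Proof.
by move=> h; rewrite -(ltr_pM2l (ltr0Sn R n)); apply: lt_le_trans h (eucl_norm_le_mx_norm x).
Qed.

Lemma compact_mx_norm_le rho : compact [set x : 'rV[R]_n | `|x| <= rho].
Proof.
apply: bounded_closed_compact.
  by exists rho; split; [exact: num_real | move=> M ltM x /= /le_trans; apply; exact: ltW].
apply: (@preimage_closed _ R (@Num.norm _ 'rV[R]_n) [set y | y <= rho]) => //.
by move=> x _; exact: norm_continuous.
Qed.

Lemma bounded_seq_cvg_subseq (u : nat -> 'rV[R]_n) rho :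
  (forall m, `|u m| <= rho) ->
  exists phi (d : 'rV[R]_n), (forall k, (k <= phi k)%N) /\ (u \o phi) @ \oo --> d.
Proof.
move=> u_le.
have [d [_ cld]] : [set x | `|x| <= rho] `&` cluster (u @ \oo) !=set0.
  by apply: (compact_mx_norm_le rho); exists 0%N => // m _; exact: u_le.
have near_d k : exists j, (k <= j)%N /\ `|d - u j| < k.+1%:R^-1.
  have [] := cld (u @` [set j | (k <= j)%N]) (ball d k.+1%:R^-1).
  - by exists k => // j /= kj; exists j.
  - by apply: nbhsx_ballx; rewrite invr_gt0 ltr0n.
  by move=> _ [[j kj <-] bj]; exists j; rewrite -ball_normE in bj.
have [phi phiP] := choice near_d.
exists phi, d; split=> [k|]; first exact: (phiP k).1.
apply/cvgrPdist_lt => e e0.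
have /cvgrPdist_lt/(_ e e0) := @cvg_harmonic R.
apply: filterS => k; rewrite sub0r normrN ger0_norm ?invr_ge0 //.
exact: lt_trans (phiP k).2.
Qed.

End RowVectorNorms.

Lemma lsc_attains_min {R : realType} {T : topologicalType} (f : T -> \bar R)
    (K : set T) :
  lower_semicontinuous f -> (forall x, f x != -oo%E) -> compact K -> K !=set0 ->
  exists2 z, K z & forall y, K y -> (f z <= f y)%E.
Proof.
move=> lsc fN cK [y0 Ky0].
pose B y := [set x | K x /\ (f x <= f y)%E].
have FF : Filter (filter_from K B).
  apply: filter_from_filter; first by exists y0.
  move=> i j Ki Kj; have [fij|fji] := leP (f i) (f j).
    by exists i => // x [Kx fx]; split; split => //; exact: le_trans fij.
  by exists j => // x [Kx fx]; split; split => //; exact: le_trans (ltW fji).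
have PF : ProperFilter (filter_from K B).
  by apply: filter_from_proper => i Ki; exists i.
have [|z [Kz clz]] := cK _ PF; first by exists y0 => // x [].
exists z => // y Ky; rewrite leNgt; apply/negP => fyz.
have fy_fin : f y \is a fin_num.
  by rewrite fin_numE fN /= lt_eqF // (lt_le_trans fyz (leey _)).
(* z clusters the sublevel sets B y, but lsc at z keeps a neighbourhood above f y *)
have [V nV HV] := lsc z (fine (f y)) ltac:(by rewrite fineK).
have [w [[Kw fw] Vw]] := clz (B y) V (ex_intro2 _ _ y Ky (fun x h => h)) nV.
by move: (HV w Vw); rewrite fineK // ltNge fw.
Qed.

Section AsymptoticGrowth.
Context {R : realType} {n : nat} {f : 'rV[R]_n -> \bar R}.

Lemma Kf_of_sublinear (t : nat -> R) (dk : nat -> 'rV[R]_n) (d : 'rV[R]_n) :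
  t @ \oo --> +oo -> dk @ \oo --> d -> (forall k, 0 < t k) ->
  (forall k, (f (t k *: dk k) <= (t k / k.+1%:R)%:E)%E) -> Kf f d.
Proof.
move=> tcvg dcvg tpos f_le; rewrite /Kf /= /asymp_fun.
apply: le_trans; first by apply: ereal_inf_lbound; exists t, dk.
rewrite limn_einf_lim.
have <- : limn (EFin \o @harmonic R) = 0%E.
  by apply: cvg_lim => //; exact: cvge_harmonic.
apply: lee_lim; first exact: is_cvg_einfs.
  by apply/cvg_ex; eexists; exact: cvge_harmonic.
apply: nearW => k; apply: le_trans; first by apply: ereal_inf_lbound; exists k => /=.
apply: le_trans (lee_wpmul2r _ (f_le k)) _; first by rewrite lee_fin invr_ge0 ltW.
by rewrite -EFinM lee_fin mulrAC mulfV ?gt_eqF // mul1r.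
Qed.

Lemma asymp_linear_growth (X : set 'rV[R]_n) :
  asymp_cone X `&` Kf f `<=` [set 0] ->
  exists c r : R, 0 < c /\ forall x, X x -> r <= `|x| -> ((c * `|x|)%:E <= f x)%E.
Proof.
move=> hK; apply: contrapT => no_growth.
have bad m : exists x, X x /\ m.+1%:R <= `|x| /\ (f x < (`|x| / m.+1%:R)%:E)%E.
  apply: contrapT => no_bad; apply: no_growth.
  exists m.+1%:R^-1, m.+1%:R; split=> [|x Xx mx]; first by rewrite invr_gt0 ltr0n.
  by rewrite leNgt; apply/negP => lt; apply: no_bad; exists x; rewrite mulrC.
have [xs xsP] := choice bad.
pose t m := `|xs m|.
have t_gt0 m : 0 < t m by have [_ [h _]] := xsP m; exact: lt_le_trans h.
pose u m := (t m)^-1 *: xs m.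
have norm_u m : `|u m| = 1.
  by rewrite normrZ ger0_norm ?invr_ge0 ?ltW // mulVf // gt_eqF.
have tu m : t m *: u m = xs m by rewrite /u scalerA mulfV ?scale1r // gt_eqF.
have [m|phi [d [phi_ge ucvg]]] := @bounded_seq_cvg_subseq R n u 1.
  by rewrite norm_u.
have tcvg : (t \o phi) @ \oo --> +oo.
  apply: (@ger_cvgy _ _ _ _ (fun k : nat => k%:R)); last exact: cvgr_idn.
  apply: nearW => k; have [_ [h _]] := xsP (phi k); apply: le_trans h.
  by rewrite ler_nat (leq_trans (phi_ge k)).
have d_neq0 : d != 0.
  have : (fun=> 1 : R) @ \oo --> `|d|.
    by under eq_fun => k do rewrite -(norm_u (phi k)); exact: cvg_norm ucvg.
  move/cvg_lim; rewrite lim_cst // => /(_ (@norm_hausdorff _ _)) /esym.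
  by apply: contra_eqN => /eqP ->; rewrite normr0 eq_sym oner_eq0.
suff /hK d0 : (asymp_cone X `&` Kf f) d by rewrite d0 eqxx in d_neq0.
split.
  exists (t \o phi), (xs \o phi); split=> //.
  by split=> [k|]; [have [] := xsP (phi k) | exact: ucvg].
apply: (@Kf_of_sublinear (t \o phi) (u \o phi) d tcvg ucvg) => [k|k].
  exact: t_gt0.
rewrite /= tu; have [_ [_ /ltW]] := xsP (phi k); move/le_trans; apply.
rewrite lee_fin ler_pM2l ?t_gt0 // lef_pV2 ?posrE ?ltr0n // ler_nat ltnS.
exact: phi_ge.
Qed.

End AsymptoticGrowth.

Section Minimizers.
Context {R : realType} {n : nat} {f : 'rV[R]_n -> \bar R} {X : set 'rV[R]_n}.

Lemma Sol_optval {z : 'rV[R]_n} : Sol f X z -> optval f X = f z.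
Proof.
move=> [Xz zmin]; apply/eqP; rewrite eq_le; apply/andP; split.
  by apply: ereal_inf_lbound; exists z.
by apply: le_ereal_inf_tmp => _ [y Xy <-]; exact: zmin.
Qed.

Lemma closed_Sol {z : 'rV[R]_n} : closed X -> lower_semicontinuous f ->
  Sol f X z -> f z \is a fin_num -> closed (Sol f X).
Proof.
move=> clX lsc [Xz zmin] fz_fin.
have -> : Sol f X = X `&` ~` [set x | ((fine (f z))%:E < f x)%E].
  apply/seteqP; split => x /=.
    move=> [Xx xmin]; split => //; rewrite fineK //.
    by apply/negP; rewrite -leNgt; exact: xmin.
  move=> [Xx]; rewrite fineK // => /negP; rewrite -leNgt => xz; split => // y Xy.
  exact: le_trans xz (zmin y Xy).
apply: closedI => //; apply: open_closedC.
exact: (proj1 (lower_semicontinuousP f) lsc).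
Qed.

Lemma Sol_exists_bounded {a : 'rV[R]_n} {rho : R} :
  lower_semicontinuous f -> (forall x, f x != -oo%E) -> closed X -> X a ->
  (forall x, X x -> rho < `|x| -> (f a < f x)%E) ->
  Sol f X !=set0 /\ Sol f X `<=` [set x | `|x| <= rho].
Proof.
move=> lsc fN clX Xa far.
have le_fa x : X x -> (f x <= f a)%E -> `|x| <= rho.
  by move=> Xx; apply: contraTT; rewrite -!ltNge; exact: far.
pose K := [set x | `|x| <= Num.max rho `|a|] `&` X.
have Ka : K a by split => //=; rewrite le_max lexx orbT.
have cK : compact K by apply: compact_closedI => //; exact: compact_mx_norm_le.
have [z [_ Xz] zmin] := @lsc_attains_min R _ f K lsc fN cK (ex_intro _ a Ka).
split; last by move=> x [Xx xmin]; apply: le_fa => //; exact: xmin.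
exists z; split => // y Xy; have [y_le|y_gt] := leP `|y| (Num.max rho `|a|).
  exact: zmin.
apply: le_trans (zmin a Ka) (ltW (far y Xy _)).
by move: y_gt; rewrite gt_max => /andP[].
Qed.

End Minimizers.

Lemma dist_set_le {R : realType} {n : nat} {S : set 'rV[R]_n} {s : 'rV[R]_n}
  (x : 'rV[R]_n) : S s -> (dist_set x S <= (eucl_norm (x - s))%:E)%E.
Proof. by move=> Ss; apply: ereal_inf_lbound; exists s. Qed.

Section LinearGrowth.
Context {R : realType} {n : nat} {f : 'rV[R]_n -> \bar R} {X : set 'rV[R]_n}.
Context {c r : R}.
Hypotheses (c_gt0 : 0 < c)
  (f_ge_lin : forall x, X x -> r <= `|x| -> ((c * `|x|)%:E <= f x)%E).

Lemma linear_growth_coercive (M : R) :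
  exists rho, forall x, X x -> rho < `|x| -> (M%:E < f x)%E.
Proof.
exists (Num.max r (`|M| / c)) => x Xx; rewrite gt_max => /andP[rx Mx].
apply: lt_le_trans _ (f_ge_lin _ Xx (ltW rx)); rewrite lte_fin.
by apply: le_lt_trans (ler_norm M) _; rewrite mulrC -ltr_pdivrMr.
Qed.

Lemma linear_growth_dist_bound (S : set 'rV[R]_n) z (fstar : R) : S z ->
  exists c' Rr : R, 0 < c' /\ 0 < Rr /\ forall x, X x -> Rr <= eucl_norm x ->
    (c'%:E * dist_set x S <= f x - fstar%:E)%E.
Proof.
(* beyond [m], c/2 |x| exceeds |fstar| + c/2 |z| *)
move=> Sz; pose m := Num.max r (2 * `|fstar| / c + `|z|).
have m_ge0 : 0 <= m.
  by rewrite le_max; apply/orP; right; rewrite addr_ge0 // divr_ge0 // ltW.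
exists (c / (2 * n.+1%:R)), (n.+1%:R * m + 1).
split; first by rewrite divr_gt0 // mulr_gt0.
split=> [|x Xx Rr_le]; first by rewrite ltr_wpDl // mulr_ge0.
have : m < `|x|.
  by apply: mx_norm_gt_of_eucl_norm_gt; apply: lt_le_trans Rr_le; rewrite ltrDl.
rewrite gt_max => /andP[rx zx].
have dist_le : (dist_set x S <= (n.+1%:R * (`|x| + `|z|))%:E)%E.
  apply: le_trans (dist_set_le x Sz) _; rewrite lee_fin.
  by apply: le_trans (eucl_norm_le_mx_norm _) _; rewrite ler_pM2l // ler_normB.
apply: le_trans (lee_wpmul2l _ dist_le) _.
  by rewrite lee_fin divr_ge0 // ?mulr_ge0 // ltW.
apply: le_trans _ (leeB (f_ge_lin _ Xx (ltW rx)) (lexx fstar%:E)).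
rewrite -EFinM -EFinB lee_fin.
have c_neq0 : c != 0 by rewrite gt_eqF.
have n_neq0 : n.+1%:R != 0 :> R by rewrite pnatr_eq0.
have : c / 2 * (2 * `|fstar| / c + `|z|) < c / 2 * `|x|.
  by rewrite ltr_pM2l // divr_gt0.
have -> : c / 2 * (2 * `|fstar| / c + `|z|) = `|fstar| + c / 2 * `|z| by field.
have -> : c / (2 * n.+1%:R) * (n.+1%:R * (`|x| + `|z|)) =
  c / 2 * `|x| + c / 2 * `|z| by field.
have -> : c * `|x| = 2 * (c / 2 * `|x|) by field.
have := ler_norm fstar; lra.
Qed.

End LinearGrowth.

Theorem mainTheorem1 (R : realType) (n : nat) (f : 'rV[R]_n -> \bar R)
  (X : set 'rV[R]_n)
  (hproper : proper_fun f) (hlsc : lower_semicontinuous f)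
  (hXne : X !=set0) (hXcl : closed X) (hunb : unbounded (dom f `&` X))
  (hK : asymp_cone X `&` Kf f = [set 0]) :
  (* (a) *)
  (exists fstar : R, optval f X = fstar%:E /\
     (Sol f X !=set0) /\ compact (Sol f X)) /\
  (* (b) *)
  (exists c Rr : R, 0 < c /\ 0 < Rr /\
     forall x, X x -> Rr <= eucl_norm x ->
       (c%:E * dist_set x (Sol f X) <= f x - optval f X)%E) /\
  (* (c) *)
  (forall M : R, exists r : R, forall x, X x -> r < eucl_norm x -> (M%:E < f x)%E).
Proof.
have fN : forall x, f x != -oo%E by case: hproper.
have : asymp_cone X `&` Kf f `<=` [set 0] by rewrite hK.
move/asymp_linear_growth => [c [r [c_gt0 f_ge_lin]]].
have [a [dom_a Xa] _] := hunb 0.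
have fa_fin : f a \is a fin_num by rewrite fin_numE fN /= lt_eqF.
have [rho far] := linear_growth_coercive c_gt0 f_ge_lin (fine (f a)).
rewrite fineK // in far.
have [[z Solz] Sol_le] := Sol_exists_bounded hlsc fN hXcl Xa far.
have fz_fin : f z \is a fin_num.
  by rewrite fin_numE fN /= lt_eqF // (le_lt_trans (Solz.2 a Xa)).
have optE : optval f X = (fine (f z))%:E by rewrite (Sol_optval Solz) fineK.
split; [|split].
- exists (fine (f z)); split=> //; split; first by exists z.
  exact: subclosed_compact (closed_Sol hXcl hlsc Solz fz_fin)
    (compact_mx_norm_le rho) Sol_le.
- by rewrite optE; exact: linear_growth_dist_bound c_gt0 f_ge_lin _ _ _ Solz.
- move=> M; have [rho' far'] := linear_growth_coercive c_gt0 f_ge_lin M.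
  by exists (n.+1%:R * rho') => x Xx /mx_norm_gt_of_eucl_norm_gt; exact: far'.
Qed.
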